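(* Fix $k\ge2$ and assume $\mathbb{E} Z<\infty$. Let $L_\infty=\inf_{n\in\mathbb{N}}L_n$ in the $k$-choice model. Then $L_\infty$ is finite almost surely, and consequently the sequences $(R_n)_{n\ge1}$, $(L_n)_{n\ge1}$, $(\Lambda_n)_{n\ge1}$ are almost surely bounded.
   Context: Let $Z$ be a random variable on $\mathbb{N}=\{1,2,3,\dots\}$. Fix $k\ge2$ and let $(Z^{(1)}_n)_{n\ge1},\dots,(Z^{(k)}_n)_{n\ge1}$ be $k$ independent sequences of i.i.d. random variables, all distributed as $Z$ and mutually independent. The $k$-choice model: define $T_n=\{n\}$ for $n\le0$ and $T_n=\{n\}\cup\bigcup_{i=1}^k T_{n-Z^{(i)}_n}$ for $n\ge1$. Let $\mathcal{L}_n=T_n\cap\{0,-1,-2,\dots\}$, $R_n=\max\mathcal{L}_n$, $L_n=\min\mathcal{L}_n$, $\Lambda_n=|\mathcal{L}_n|$. *)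

From HB Require Import structures.
From mathcomp Require Import all_boot all_order all_algebra.
From mathcomp Require Import all_classical all_reals all_analysis.
Set Implicit Arguments. Unset Strict Implicit. Unset Printing Implicit Defensive.
Import Order.TTheory GRing.Theory Num.Theory.
Local Open Scope ring_scope.
Local Open Scope classical_set_scope.

(* [zeta i m] plays the role of Z^{(i+1)}_m (i = 0..k-1).
   [Tfuel zeta k fuel n] computes T_n by the recursion
     T_n = {n}                                   for n <= 0,
     T_n = {n} ∪ ⋃_{i<k} T_{n - zeta i n}        for n >= 1,
   as a list (possibly with repetitions).  The fuel is only needed for
   structural recursion; when all zeta i m >= 1 the fuel [n] used in [T]
   below is always sufficient, so [T] is exactly the recursively defined set. *)
Fixpoint Tfuel (zeta : nat -> nat -> nat) (k fuel : nat) (n : int) : seq int :=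
  if n <= 0 then [:: n] else
  match fuel with
  | 0 => [:: n]
  | f.+1 => n :: flatten [seq Tfuel zeta k f (n - (zeta i `|n|%N)%:Z) | i <- iota 0 k]
  end.

Definition T (zeta : nat -> nat -> nat) (k n : nat) : seq int :=
  Tfuel zeta k n n%:Z.

Definition Lcal (zeta : nat -> nat -> nat) (k n : nat) : seq int :=
  undup [seq x <- T zeta k n | x <= 0].

(* R_n = max \mathcal L_n,  L_n = min \mathcal L_n, Lambda_n = |\mathcal L_n|.
   (\mathcal L_n is nonempty when all zeta >= 1; the seed [head 0 _] is an
   element of the list, so these are the true max / min.) *)
Definition Rn (zeta : nat -> nat -> nat) (k n : nat) : int :=
  let s := Lcal zeta k n in foldr Num.max (head 0 s) s.
Definition Ln (zeta : nat -> nat -> nat) (k n : nat) : int :=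
  let s := Lcal zeta k n in foldr Num.min (head 0 s) s.
Definition Lambda (zeta : nat -> nat -> nat) (k n : nat) : nat :=
  size (Lcal zeta k n).

Definition mutually_independent {d} {Omega : measurableType d} {R : realType}
  (P : probability Omega R) {I : eqType} (J : set I) (X : I -> Omega -> nat) :=
  forall (F : seq I), uniq F -> (forall j, j \in F -> J j) ->
  forall A : I -> set nat,
    P (\bigcap_(j in [set j | j \in F]) (X j @^-1` A j))
    = (\prod_(j <- F) P (X j @^-1` A j))%E.

Definition same_law {d} {Omega : measurableType d} {R : realType}
  (P : probability Omega R) (X Y : Omega -> nat) :=
  forall A : set nat, P (X @^-1` A) = P (Y @^-1` A).

(* measurability of a nat-valued map (nat carries the discrete sigma-algebra) *)
Definition nat_measurable {d} {Omega : measurableType d} (X : Omega -> nat) :=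
  forall m : nat, measurable (X @^-1` [set m]).

(** Borel-Cantelli: [\sum_m P(Z > m) <= E Z < oo], so almost surely every
    [Z^(i)_(m+1)] is at most [m] from some point on.  Then all the jumps
    [n - Z^(i)_n] of the recursion are bounded below by some [-C], hence so is
    every vertex of every tree [T_n], and [\mathcal L_n] lies in [[-C, 0]]. *)
From HB Require Import structures.
From mathcomp Require Import all_boot all_order all_algebra.
From mathcomp Require Import all_classical all_reals all_analysis.
From mathcomp Require Import measurable_realfun zify.
Set Implicit Arguments.
Unset Strict Implicit.
Unset Printing Implicit Defensive.

Import Order.TTheory GRing.Theory Num.Theory.
Local Open Scope ring_scope.
Local Open Scope classical_set_scope.

Lemma foldr_sel_mem (T : eqType) (op : T -> T -> T) (a : T) (s : seq T) :
  (forall x y, op x y = x \/ op x y = y) -> foldr op a s \in a :: s.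
Proof.
move=> op_sel; elim: s => [|y s IH] /=; first exact: mem_head.
have [->|->] := op_sel y (foldr op a s); first by rewrite !inE eqxx orbT.
by move: IH; rewrite !inE => /orP [->|->]; rewrite ?orbT.
Qed.

Section kchoice_bounded.
Variables (zeta : nat -> nat -> nat) (k C : nat).
Hypothesis zeta_le : forall i m, (i < k)%N -> (1 <= m)%N -> (zeta i m <= m + C)%N.

Lemma Tfuel_ge fuel (n : int) : - (C : int) <= n ->
  forall x, x \in Tfuel zeta k fuel n -> - (C : int) <= x.
Proof.
elim: fuel n => [|f IH] n Cn x /=; case: ifP => [_|n_gt0]; rewrite ?inE;
  try by move=> /eqP ->.
case/orP => [/eqP -> //|/flatten_mapP [i]].
rewrite mem_iota add0n => /andP [_ ik]; apply: IH.
have n_pos : 0 < n by rewrite ltNge n_gt0.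
have n_abs : (`|n|%N : int) = n by rewrite gez0_abs ?ltW.
have := @zeta_le i `|n|%N ik; lia.
Qed.

Lemma mem_Lcal n x : x \in Lcal zeta k n -> - (C : int) <= x <= 0.
Proof.
rewrite mem_undup mem_filter => /andP [-> /Tfuel_ge ->] //; lia.
Qed.

Lemma Lambda_le n : (Lambda zeta k n <= C.+1)%N.
Proof.
rewrite /Lambda -[C.+1](size_iota 0) -(size_map (fun j : nat => - (j : int))).
apply: uniq_leq_size; first exact: undup_uniq.
move=> x /mem_Lcal x_range; apply/mapP; exists `|x|%N; rewrite ?mem_iota; lia.
Qed.

Lemma foldr_Lcal_range (op : int -> int -> int) n :
  (forall x y, op x y = x \/ op x y = y) ->
  - (C : int) <= foldr op (head 0 (Lcal zeta k n)) (Lcal zeta k n) <= 0.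
Proof.
move=> op_sel; set s := Lcal zeta k n.
have head_mem : head 0 s \in 0 :: s by case: s => [|y s'] /=; rewrite !inE eqxx ?orbT.
move: (foldr_sel_mem (head 0 s) s op_sel); rewrite inE => /orP [/eqP ->|].
  by move: head_mem; rewrite inE => /orP [/eqP ->|/mem_Lcal]; lia.
exact: mem_Lcal.
Qed.

Lemma kchoice_bounded n :
  [/\ - (C : int) <= Ln zeta k n, (`|Rn zeta k n| <= C)%N,
      (`|Ln zeta k n| <= C)%N & (Lambda zeta k n <= C.+1)%N].
Proof.
have max_sel (x y : int) : Num.max x y = x \/ Num.max x y = y by case: leP; auto.
have min_sel (x y : int) : Num.min x y = x \/ Num.min x y = y by case: leP; auto.
have := foldr_Lcal_range n max_sel; have := foldr_Lcal_range n min_sel.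
rewrite /Rn /Ln /=; move: (foldr _ _ _) (foldr _ _ _) => l r.
by split; [lia | lia | lia | exact: Lambda_le].
Qed.

End kchoice_bounded.

Lemma eventually_le_bounded_excess (u : nat -> nat) N :
  (forall m, (N <= m)%N -> (u m <= m)%N) -> exists C, forall m, (u m <= m + C)%N.
Proof.
move=> u_le; exists (\sum_(j < N) u j)%N => m.
have [mN|/u_le um] := ltnP m N; last exact: leq_trans um (leq_addr _ _).
rewrite (bigD1 (Ordinal mN)) //= addnCA; exact: leq_addr.
Qed.

Lemma uniform_bounded_excess (zeta : nat -> nat -> nat) k :
  (forall i, (i < k)%N -> exists C, forall m, (zeta i m <= m + C)%N) ->
  exists C, forall i m, (i < k)%N -> (zeta i m <= m + C)%N.
Proof.
elim: k => [|k IH] excess; first by exists 0%N.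
have [C1 HC1] := IH (fun i ik => excess i (ltnW ik)).
have [C2 HC2] := excess k (ltnSn k).
exists (maxn C1 C2) => i m; rewrite ltnS leq_eqVlt => /orP [/eqP ->|ik].
- exact: leq_trans (HC2 m) (leq_add _ (leq_maxr _ _)).
- exact: leq_trans (HC1 i m ik) (leq_add _ (leq_maxl _ _)).
Qed.

Lemma nat_partial_sums_unbounded (u : nat -> nat) :
  (forall N, exists2 m, (N <= m)%N & u m != 0%N) ->
  forall j, exists n, (j <= \sum_(0 <= m < n) u m)%N.
Proof.
move=> nonzero; elim=> [|j [n Hn]]; first by exists 0%N.
have [m nm um] := nonzero n; exists m.+1.
rewrite big_nat_recr //= (big_cat_nat _ nm) //=; lia.
Qed.

Lemma sum_ltn_le (n z : nat) : (\sum_(0 <= m < n) (m < z)%N <= z)%N.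
Proof.
suff : (\sum_(0 <= m < n) (m < z)%N <= minn n z)%N.
  by move/leq_trans; apply; exact: geq_minr.
elim: n => [|n IH]; first by rewrite big_geq.
rewrite big_nat_recr //=; case: ltnP => /= zn; lia.
Qed.

Section nat_series.
Context (R : realType).
Local Open Scope ereal_scope.

Lemma nneseries_nat_eventually0 (u : nat -> nat) :
  \sum_(m <oo) ((u m)%:R : R)%:E \is a fin_num ->
  exists N, forall m, (N <= m)%N -> u m = 0%N.
Proof.
move=> sum_fin; apply/not_existsP => not_eventually0.
have nonzero N : exists2 m, (N <= m)%N & u m != 0%N.
  have /existsNP [m] := not_eventually0 N.
  by move=> /not_implyP [Nm /eqP um]; exists m.
set S := \sum_(m <oo) _ in sum_fin.
have [n big_partial] := nat_partial_sums_unbounded nonzero (Num.trunc (fine S)).+1.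
have partial_le : ((\sum_(0 <= m < n) u m)%:R : R)%:E <= S.
  by rewrite natr_sum -sumEFin; apply: nneseries_lim_ge => i _ _; rewrite lee_fin.
move: partial_le; rewrite -(fineK sum_fin) lee_fin; apply/negP; rewrite -ltNge.
by apply: lt_le_trans (truncnS_gt _) _; rewrite ler_nat.
Qed.

End nat_series.

Section indicator_series.
Context d (T : measurableType d) (R : realType) (mu : {measure set T -> \bar R}).
Local Open Scope ereal_scope.
Variable A : nat -> set T.
Hypothesis mA : forall m, measurable (A m).

Let indic_ge0 m w : 0 <= (\1_(A m) w : R)%:E.
Proof. by rewrite lee_fin. Qed.

Let measurable_indicE m : measurable_fun setT (EFin \o (\1_(A m) : T -> R)).
Proof. by apply/measurable_EFinP; exact: measurable_indic. Qed.

Lemma measurable_indic_nneseries :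
  measurable_fun setT (fun w => \sum_(m <oo) (\1_(A m) w : R)%:E).
Proof.
exact: ge0_emeasurable_sum (fun m w _ _ => indic_ge0 m w) (fun m _ => measurable_indicE m).
Qed.

Lemma integral_indic_nneseries :
  \int[mu]_w \sum_(m <oo) (\1_(A m) w : R)%:E = \sum_(m <oo) mu (A m).
Proof.
rewrite integral_nneseries //; apply: eq_eseriesr => m _.
by rewrite integral_indic ?setIT.
Qed.

Lemma borel_cantelli : \sum_(m <oo) mu (A m) < +oo ->
  {ae mu, forall w, exists N, forall m, (N <= m)%N -> ~ A m w}.
Proof.
move=> sum_fin.
have indic_sum_integrable :
    mu.-integrable setT (fun w => \sum_(m <oo) (\1_(A m) w : R)%:E).
  apply/integrableP; split; first exact: measurable_indic_nneseries.
  under eq_integral => w _ do rewrite gee0_abs ?nneseries_ge0//.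
  by rewrite integral_indic_nneseries.
apply: filterS (integrable_ae measurableT indic_sum_integrable).
move=> w /(_ I); under eq_eseriesr => m _ do rewrite indicE.
move=> /nneseries_nat_eventually0 [N u0]; exists N => m /u0 + Amw.
by rewrite (mem_set Amw).
Qed.

End indicator_series.

Section nat_random_variables.
Context d (Omega : measurableType d) (R : realType) (P : probability Omega R).
Local Open Scope ereal_scope.

Lemma nat_measurable_preimage (X : Omega -> nat) (S : set nat) :
  nat_measurable X -> measurable (X @^-1` S).
Proof.
move=> mX; rewrite -[S]image_id -bigcup_imset1 preimage_bigcup.
by apply: bigcup_measurable => j _; exact: mX.
Qed.

Lemma nat_measurable_fun (X : Omega -> nat) :
  nat_measurable X -> measurable_fun setT (fun w => ((X w)%:R : R)).
Proof.
move=> mX _ Y _; rewrite setTI.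
exact: (nat_measurable_preimage [set n : nat | Y (n%:R : R)] mX).
Qed.

Lemma tail_sum_le_expectation (X : Omega -> nat) : nat_measurable X ->
  \sum_(m <oo) P [set w | (m < X w)%N] <= 'E_P[fun w => (X w)%:R].
Proof.
move=> mX; pose tail m := [set w | (m < X w)%N].
have mtail m : measurable (tail m).
  exact: (nat_measurable_preimage [set x | (m < x)%N] mX).
rewrite -(integral_indic_nneseries P mtail) expectation.unlock.
apply: ge0_le_integral => //.
- by move=> w _; apply: nneseries_ge0 => m _ _; rewrite lee_fin.
- exact: measurable_indic_nneseries.
- by apply/measurable_EFinP; exact: nat_measurable_fun.
move=> w _; apply: lime_le; first by apply: is_cvg_nneseries => m _ _; rewrite lee_fin.
apply: nearW => n; rewrite sumEFin lee_fin.
under eq_bigr => m _ do rewrite indicE mem_setE /=.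
rewrite -natr_sum ler_nat; exact: sum_ltn_le.
Qed.

Lemma ae_eventually_le_index (k : nat) (Z : Omega -> nat)
    (Zs : nat -> nat -> Omega -> nat) :
  nat_measurable Z ->
  (forall i n, (i < k)%N -> (1 <= n)%N -> nat_measurable (Zs i n)) ->
  (forall i n, (i < k)%N -> (1 <= n)%N -> same_law P (Zs i n) Z) ->
  'E_P[fun w => (Z w)%:R] < +oo ->
  {ae P, forall w i, (i < k)%N ->
     exists N, forall m, (N <= m)%N -> (Zs i m w <= m)%N}.
Proof.
move=> mZ mZs law EZ; apply: ae_foralln => i.
have [ik|_] := ltnP i k; last by apply: aeW => w.
pose A m := Zs i m.+1 @^-1` [set x | (m < x)%N].
have mA m : measurable (A m) by exact: nat_measurable_preimage (mZs _ _ ik _).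
have sum_fin : \sum_(m <oo) P (A m) < +oo.
  rewrite (eq_eseriesr (fun m _ => law i m.+1 ik isT [set x | (m < x)%N])).
  exact: le_lt_trans (tail_sum_le_expectation mZ) EZ.
apply: filterS (borel_cantelli mA sum_fin) => w [N HN] _.
by exists N.+1 => -[//|m] /HN /negP; rewrite -leqNgt => /leqW.
Qed.

End nat_random_variables.

Theorem mainTheorem14 (R : realType) (d : measure_display) (Omega : measurableType d)
  (P : probability Omega R) (k : nat) (Z : Omega -> nat)
  (Zs : nat -> nat -> Omega -> nat) :
  (2 <= k)%N ->
  nat_measurable Z -> (forall w, (1 <= Z w)%N) ->
  (forall i n, (i < k)%N -> (1 <= n)%N -> nat_measurable (Zs i n)) ->
  (forall i n w, (i < k)%N -> (1 <= n)%N -> (1 <= Zs i n w)%N) ->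
  (forall i n, (i < k)%N -> (1 <= n)%N -> same_law P (Zs i n) Z) ->
  mutually_independent P [set ij : nat * nat | (ij.1 < k)%N /\ (1 <= ij.2)%N]
    (fun ij => Zs ij.1 ij.2) ->
  ('E_P[fun w => (Z w)%:R] < +oo)%E ->
  {ae P, forall w,
     (* L_oo = inf_n L_n is finite, i.e. > -oo *)
     (exists M : int, forall n, (1 <= n)%N -> M <= Ln (fun i m => Zs i m w) k n)
     /\ (exists B : nat, forall n, (1 <= n)%N ->
           [/\ `|Rn (fun i m => Zs i m w) k n|%N <= B,
               `|Ln (fun i m => Zs i m w) k n|%N <= B
             & Lambda (fun i m => Zs i m w) k n <= B]%N)}.
Proof.
move=> _ mZ _ mZs _ law _ EZ.
apply: filterS (ae_eventually_le_index mZ mZs law EZ) => w eventually_le.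
have [C jump_le] : exists C, forall i m, (i < k)%N -> (Zs i m w <= m + C)%N.
  apply: uniform_bounded_excess => i /eventually_le [N].
  exact: eventually_le_bounded_excess.
have bounded n := kchoice_bounded (fun i m ik _ => jump_le i m ik) n.
split; first by exists (- (C : int)) => n _; case: (bounded n).
by exists C.+1 => n _; case: (bounded n) => _ /leqW ? /leqW ?.
Qed.
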